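(* Let $m,n$ be positive integers and $j$ a non-negative integer such that $m\leq n$ and $j<n$. Then \begin{align*} |\mathrm{WHom}^{j}(P_m,P_n)| =&\sum_{t=j+1}^{j+\left\lfloor \frac{m-j-1}{2}\right\rfloor}\ \sum_{s=t-j}^{m-1-t}\left[\binom{m-1}{s,\,t,\,m-1-s-t} - \binom{m-1}{t-j-1,\,s+j+1,\,m-1-s-t}\right]\\ &+\sum_{t=\max\{j-n+m+1,0\}}^{j}\ \sum_{s=0}^{m-1-t}\binom{m-1}{s,\,t,\,m-1-s-t}+\sum_{t=0}^{j-n+m}\ \sum_{s=0}^{n-j-1}\binom{m-1}{s,\,t,\,m-1-s-t}\\ &+\sum_{t=n-j}^{n-j-1+\left\lfloor\frac{j-n+m}{2}\right\rfloor}\ \sum_{s=t-(n-j-1)}^{m-1-t}\left[\binom{m-1}{s,\,t,\,m-1-s-t} - \binom{m-1}{t-n+j,\,s+n-j,\,m-1-s-t}\right]. \end{align*}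
   Context: For a positive integer $n$, $P_n$ denotes the path with vertex set $\{0,1,\dots,n-1\}$ and edge set $\{\{i,i+1\} : i=0,\dots,n-2\}$. A weak homomorphism from a graph $G$ to a graph $H$ is a map $f:V(G)\to V(H)$ such that for every edge $\{x,y\}\in E(G)$, either $f(x)=f(y)$ or $\{f(x),f(y)\}\in E(H)$. $\mathrm{WHom}^{j}(P_m,P_n)$ denotes the set of weak homomorphisms $f:P_m\to P_n$ with $f(0)=j$. The multinomial coefficient $\binom{N}{a,b,c}$ equals $\frac{N!}{a!\,b!\,c!}$ when $a,b,c\ge 0$ and $a+b+c=N$, and is $0$ if any of $a,b,c$ is negative. A sum whose upper limit is smaller than its lower limit is zero. *)

From mathcomp Require Import all_boot all_order all_algebra.
Set Implicit Arguments. Unset Strict Implicit. Unset Printing Implicit Defensive.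
Import Order.TTheory GRing.Theory Num.Theory.

Definition path_edge (n : nat) : rel 'I_n :=
  fun x y => (x.+1 == y :> nat) || (y.+1 == x :> nat).

Definition weak_hom (m n : nat) (f : {ffun 'I_m -> 'I_n}) : bool :=
  [forall x : 'I_m, forall y : 'I_m,
     path_edge x y ==> ((f x == f y) || path_edge (f x) (f y))].

Definition WHom (j m n : nat) : {set {ffun 'I_m -> 'I_n}} :=
  [set f | weak_hom f && [forall x : 'I_m, (val x == 0%N) ==> (val (f x) == j)]].

Local Open Scope ring_scope.

Definition multinom (N : nat) (a b c : int) : int :=
  if [&& 0 <= a, 0 <= b, 0 <= c & a + b + c == N%:Z] then
    ((N`! %/ ((absz a)`! * (absz b)`! * (absz c)`!))%N)%:Z
  else 0.

Definition zsum (lo hi : int) (F : int -> int) : int :=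
  if lo <= hi then \sum_(0 <= k < absz (hi - lo + 1)) F (lo + k%:Z) else 0.

From mathcomp Require Import all_boot all_order all_algebra.
From mathcomp Require Import zify ring.
Import Order.TTheory GRing.Theory Num.Theory.
Set Implicit Arguments. Unset Strict Implicit. Unset Printing Implicit Defensive.

(* A weak homomorphism P_m -> P_n with f(0) = j is a walk of M = m - 1 steps
   in {-1, 0, +1} from j that stays in [0, n - 1]; unconstrained, there are
   trinom M u v such walks with u up-steps and v down-steps.  Since M < n a walk
   can leave the strip on one side only, and the reflection principle counts the
   constrained walks as the sum of trinom M u v weighted by mirror_sign (j + u - v),
   which is 1 on [0, n - 1] and -1 on the mirror images of that interval in the
   walls -1 and n: both counts satisfy the same one-step recursion, and the
   weighted sum vanishes on the walls.  Every multinomial of the theorem is a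
   trinomial coefficient, so after a change of variables in each double sum the
   identity reduces to comparing the coefficients of each trinom M u v, which is
   integer arithmetic. *)

Fixpoint trinom (M a b : nat) : nat :=
  match M with
  | 0 => (a == 0) && (b == 0)
  | M'.+1 => (if a is a'.+1 then trinom M' a' b else 0)
             + (if b is b'.+1 then trinom M' a b' else 0) + trinom M' a b
  end.

Lemma trinom_eq0 M a b : M < a + b -> trinom M a b = 0.
Proof.
elim: M a b => [|M IH] [|a] [|b] //= ltM; rewrite ?IH //; lia.
Qed.

Lemma trinomC M a b : trinom M a b = trinom M b a.
Proof.
elim: M a b => [|M IH] a b /=; first by rewrite andbC.
case: a => [|a]; case: b => [|b] //=.
- by rewrite (IH 0 b) (IH 0 b.+1); lia.
- by rewrite (IH a 0) (IH a.+1 0); lia.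
- by rewrite (IH a b.+1) (IH a.+1 b) (IH a.+1 b.+1); lia.
Qed.

Lemma trinom_fact M a b : a + b <= M ->
  trinom M a b * (a`! * b`! * (M - a - b)`!) = M`!.
Proof.
elim: M a b => [|M IH] a b leM /=; first by case: a b leM => [|a] [|b].
have Ea : (if a is a'.+1 then trinom M a' b else 0) * (a`! * b`! * (M.+1 - a - b)`!)
          = a * M`!.
  case: a leM => [|a] leM //; rewrite -(IH a b); last lia.
  by rewrite subSS factS; ring.
have Eb : (if b is b'.+1 then trinom M a b' else 0) * (a`! * b`! * (M.+1 - a - b)`!)
          = b * M`!.
  case: b leM {Ea} => [|b] leM //; rewrite -(IH a b); last lia.
  by rewrite -subnDA addnS subSS subnDA factS; ring.
have Ec : trinom M a b * (a`! * b`! * (M.+1 - a - b)`!) = (M.+1 - a - b) * M`!.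
  have [le_abM|lt_Mab] := leqP (a + b) M; last first.
    by rewrite trinom_eq0 // (_ : M.+1 - a - b = 0) //; lia.
  rewrite -(IH a b) // (_ : M.+1 - a - b = (M - a - b).+1); last lia.
  by rewrite factS; ring.
rewrite !mulnDl Ea Eb Ec -!mulnDl factS; congr (_ * _); lia.
Qed.

Section Walks.
Variable n : nat.

Definition fcons M (a : 'I_n) (g : {ffun 'I_M -> 'I_n}) : {ffun 'I_M.+1 -> 'I_n} :=
  [ffun i => if unlift ord0 i is Some i' then g i' else a].

Definition ftail M (f : {ffun 'I_M.+1 -> 'I_n}) : {ffun 'I_M -> 'I_n} :=
  [ffun i => f (lift ord0 i)].

Lemma fcons0 M a (g : {ffun 'I_M -> 'I_n}) : fcons a g ord0 = a.
Proof. by rewrite ffunE unlift_none. Qed.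

Lemma fconsS M a (g : {ffun 'I_M -> 'I_n}) i : fcons a g (lift ord0 i) = g i.
Proof. by rewrite ffunE liftK. Qed.

Lemma fconsK M a : cancel (@fcons M a) (@ftail M).
Proof. by move=> g; apply/ffunP => i; rewrite ffunE fconsS. Qed.

Lemma ftailK M (f : {ffun 'I_M.+1 -> 'I_n}) : fcons (f ord0) (ftail f) = f.
Proof.
by apply/ffunP => i; rewrite ffunE; case: unliftP => [j ->|->] //; rewrite ffunE.
Qed.

Definition weak_edge (a b : 'I_n) := (a == b) || path_edge a b.

Lemma weak_edgeE a b : weak_edge a b = (a <= b.+1) && (b <= a.+1).
Proof. rewrite /weak_edge /path_edge -val_eqE /=; lia. Qed.

Lemma path_edge_lift M (x y : 'I_M) :
  path_edge (lift ord0 x : 'I_M.+1) (lift ord0 y) = path_edge x y.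
Proof. by rewrite /path_edge /= /bump !add1n !eqSS. Qed.

Lemma path_edge0 M (x : 'I_M.+1) :
  path_edge (ord0 : 'I_M.+2) (lift ord0 x) = (x == ord0).
Proof. by rewrite /path_edge -val_eqE /= /bump add1n; lia. Qed.

Lemma path_edgeC M (x y : 'I_M) : path_edge x y = path_edge y x.
Proof. by rewrite /path_edge orbC. Qed.

Lemma weak_hom_fcons M a (g : {ffun 'I_M.+1 -> 'I_n}) :
  weak_hom (fcons a g) = weak_edge a (g ord0) && weak_hom g.
Proof.
apply/forallP/andP => [H | [a_g0 /forallP Hg] x].
  split.
    have /forallP/(_ (lift ord0 ord0))/implyP := H ord0.
    by rewrite fcons0 fconsS path_edge0 eqxx; apply.
  apply/forallP => x; apply/forallP => y; apply/implyP => xy.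
  have /forallP/(_ (lift ord0 y))/implyP := H (lift ord0 x).
  by rewrite !fconsS path_edge_lift; apply.
apply/forallP => y; apply/implyP.
case: (unliftP ord0 x) => [x' ->|->]; case: (unliftP ord0 y) => [y' ->|->];
  rewrite ?fcons0 ?fconsS.
- by rewrite path_edge_lift; apply/implyP; move/forallP: (Hg x').
- rewrite path_edgeC path_edge0 => /eqP ->.
  by move: a_g0; rewrite /weak_edge eq_sym path_edgeC.
- by rewrite path_edge0 => /eqP ->.
- by rewrite /path_edge.
Qed.

Lemma WHomE j M (f : {ffun 'I_M.+1 -> 'I_n}) :
  (f \in WHom j M.+1 n) = weak_hom f && (f ord0 == j :> nat).
Proof.
rewrite inE; congr (_ && _); apply/forallP/idP => [/(_ ord0) //|f0 x].
by apply/implyP => x0; rewrite (_ : x = ord0) //; apply/val_inj/eqP.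
Qed.

Lemma card_WHomS j M : j < n ->
  #|WHom j M.+2 n| = \sum_(k < n | (j <= k.+1) && (k <= j.+1)) #|WHom k M.+1 n|.
Proof.
move=> ltjn; pose j' := Ordinal ltjn.
rewrite -sum1_card (reindex (fun p => fcons p.1 p.2)) /=; last first.
  exists (fun f : {ffun _ -> _} => (f ord0, ftail f)) => [[a g]|f] _.
    by rewrite /= fcons0 fconsK.
  by rewrite ftailK.
rewrite big_mkcond -(pair_big xpredT xpredT
  (fun a g => if fcons a g \in WHom j M.+2 n then 1 else 0)) /=.
rewrite (bigD1 j') //= [X in _ + X]big1 ?addn0; last first.
  move=> a ne_aj; apply: big1 => g _; rewrite WHomE fcons0.
  by case: ifP => // /andP[_ /eqP aj]; case/eqP: ne_aj; apply: val_inj.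
rewrite -big_mkcond (partition_big (fun g : {ffun 'I_M.+1 -> 'I_n} => g ord0)
  (fun k : 'I_n => (j <= k.+1) && (k <= j.+1))) /=.
  apply: eq_bigr => k jk; rewrite -sum1_card; apply: eq_bigl => g.
  rewrite !WHomE fcons0 weak_hom_fcons eqxx andbT val_eqE.
  by case: eqP => [->|_]; rewrite ?andbF // weak_edgeE jk.
by move=> g; rewrite WHomE fcons0 weak_hom_fcons weak_edgeE => /andP[/andP[]].
Qed.

End Walks.

Local Open Scope ring_scope.

Definition iverson (b : bool) : int := b%:R.

Ltac case_iverson :=
  repeat match goal with |- context [iverson ?b] =>
    lazymatch b with true => fail | false => fail | _ =>
      let E := fresh "E" in case E: b end end.

Lemma iverson1 (b : bool) : b -> iverson b = 1.
Proof. by move->. Qed.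

Lemma iverson0 (b : bool) : ~~ b -> iverson b = 0.
Proof. by move/negbTE->. Qed.

Lemma iversonM a b : iverson a * iverson b = iverson (a && b).
Proof. by case: a; case: b; rewrite /iverson ?mulr1 ?mulr0. Qed.

Lemma sum_iverson_eq (T : eqType) (r : seq T) x0 (F : T -> int) : uniq r ->
  \sum_(x <- r) iverson (x == x0) * F x = iverson (x0 \in r) * F x0.
Proof.
move=> r_uniq; rewrite (eq_bigr (fun x => if x == x0 then F x else 0)); last first.
  by move=> x _; rewrite /iverson; case: eqP; rewrite ?mul1r ?mul0r.
rewrite -(big_mkcond (pred1 x0)) /iverson; case x0r: (x0 \in r).
  by rewrite -(big_filter r (pred1 x0)) filter_pred1_uniq // big_seq1 mul1r.
by rewrite big_hasC ?mul0r // has_pred1 x0r.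
Qed.

Lemma sum_ord_iverson_eq N (x : int) (F : nat -> int) :
  \sum_(u < N) iverson (u%:Z == x) * F u = iverson ((0 <= x) && (x < N%:Z)) * F `|x|%N.
Proof.
case: x => [k|k] /=; last by rewrite big1 ?mul0r // => u _; rewrite /iverson mul0r.
rewrite (eq_bigr (fun u : 'I_N => if u == k :> nat then F u else 0)); last first.
  by move=> u _; rewrite eqz_nat /iverson; case: eqP; rewrite ?mul1r ?mul0r.
rewrite -(big_mkcond (fun u : 'I_N => u == k :> nat)) big_ord1_eq ltz_nat /iverson /=.
by case: ifP; rewrite ?mul1r ?mul0r.
Qed.

Section TrinomialCombinations.
Variable M : nat.

Definition trinom_comb (w : nat -> nat -> int) : int :=
  \sum_(u < M.+1) \sum_(v < M.+1) w u v * (trinom M u v)%:Z.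

Lemma eq_trinom_comb w w' : (forall u v, (u + v <= M)%N -> w u v = w' u v) ->
  trinom_comb w = trinom_comb w'.
Proof.
move=> ww'; apply: eq_bigr => u _; apply: eq_bigr => v _.
have [le_uvM|lt_Muv] := leqP (u + v) M; first by rewrite ww'.
by rewrite trinom_eq0 // !mulr0.
Qed.

Lemma trinom_combD w w' :
  trinom_comb w + trinom_comb w' = trinom_comb (fun u v => w u v + w' u v).
Proof.
rewrite -big_split; apply: eq_bigr => u _.
by rewrite -big_split; apply: eq_bigr => v _; rewrite mulrDl.
Qed.

Lemma trinom_combB w w' :
  trinom_comb w - trinom_comb w' = trinom_comb (fun u v => w u v - w' u v).
Proof.
rewrite -sumrB; apply: eq_bigr => u _.
by rewrite -sumrB; apply: eq_bigr => v _; rewrite mulrBl.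
Qed.

Lemma trinom_comb_sum (I : Type) (r : seq I) (w : I -> nat -> nat -> int) :
  \sum_(i <- r) trinom_comb (w i) = trinom_comb (fun u v => \sum_(i <- r) w i u v).
Proof.
rewrite exchange_big; apply: eq_bigr => u _.
by rewrite exchange_big; apply: eq_bigr => v _; rewrite mulr_suml.
Qed.

Lemma trinom_combC w : trinom_comb w = trinom_comb (fun u v => w v u).
Proof.
rewrite /trinom_comb exchange_big; apply: eq_bigr => u _.
by apply: eq_bigr => v _; rewrite trinomC.
Qed.

Lemma trinom_comb_widen Nu Nv (w : nat -> nat -> int) : (M < Nu)%N -> (M < Nv)%N ->
  \sum_(u < Nu) \sum_(v < Nv) w u v * (trinom M u v)%:Z = trinom_comb w.
Proof.
move=> ltMu ltMv; rewrite /trinom_comb.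
rewrite (big_ord_widen _ (fun u => \sum_(v < M.+1) w u v * (trinom M u v)%:Z) ltMu).
rewrite [RHS]big_mkcond; apply: eq_bigr => u _ /=; case: ltnP => [ltuM|leMu]; last first.
  by rewrite big1 // => v _; rewrite trinom_eq0 ?mulr0 //; lia.
rewrite (big_ord_widen _ (fun v => w u v * (trinom M u v)%:Z) ltMv) [RHS]big_mkcond.
apply: eq_bigr => v _ /=; case: ltnP => // leMv.
by rewrite trinom_eq0 ?mulr0 //; lia.
Qed.

Lemma multinomE a b :
  multinom M a b (M%:Z - a - b) =
  trinom_comb (fun u v => iverson ((u%:Z == a) && (v%:Z == b))).
Proof.
rewrite /trinom_comb.
under eq_bigr => u _ do under eq_bigr => v _ do rewrite -iversonM -mulrA.
under eq_bigr => u _ do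
  rewrite -mulr_sumr (sum_ord_iverson_eq _ _ (fun v => (trinom M u v)%:Z)).
rewrite (sum_ord_iverson_eq _ _ (fun u => _ * (trinom M u _)%:Z)) /multinom /iverson.
case: a => [a|a]; case: b => [b|b] //=; rewrite ?mul0r ?mulr0 //.
have [leM|ltM] := leqP (a + b) M; last first.
  by rewrite trinom_eq0 // !mulr0; case: ifP => // /andP[]; lia.
have ltaM : a%:Z < M.+1%:Z by lia.
have ltbM : b%:Z < M.+1%:Z by lia.
rewrite ifT ?ltaM ?ltbM ?mul1r; last lia.
rewrite (_ : `|_|%N = M - a - b)%N; last lia.
by rewrite -(trinom_fact leM) mulnK ?muln_gt0 ?fact_gt0.
Qed.

End TrinomialCombinations.

Lemma trinom_combS M w :
  trinom_comb M.+1 w =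
  trinom_comb M (fun u v => w u.+1 v) + trinom_comb M (fun u v => w u v.+1)
  + trinom_comb M w.
Proof.
rewrite {1}/trinom_comb /=.
under eq_bigr => u _ do under eq_bigr => v _ do rewrite !PoszD !mulrDr.
under eq_bigr => u _ do rewrite !big_split.
rewrite !big_split /= [X in _ + X = _]trinom_comb_widen //.
congr (_ + _ + _).
  rewrite big_ord_recl big1 ?add0r => [|v _]; last by rewrite mulr0.
  by rewrite -(@trinom_comb_widen M M.+1 M.+2).
rewrite -(@trinom_comb_widen M M.+2 M.+1) //.
apply: eq_bigr => u _; rewrite big_ord_recl mulr0 add0r.
by apply: eq_bigr => v _.
Qed.

Definition zrange (lo hi : int) : seq int :=
  if lo <= hi then [seq lo + k%:Z | k <- iota 0 `|hi - lo + 1|] else [::].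

Lemma zsumE lo hi F : zsum lo hi F = \sum_(k <- zrange lo hi) F k.
Proof.
by rewrite /zsum /zrange; case: ifP => _; rewrite ?big_nil // big_map /index_iota subn0.
Qed.

Lemma mem_zrange lo hi k : (k \in zrange lo hi) = (lo <= k <= hi).
Proof.
rewrite /zrange; case: ifP => [lohi|]; last by rewrite in_nil; lia.
apply/mapP/idP => [[i] | /andP[lok khi]].
  by rewrite mem_iota => /andP[_ ?] ->; lia.
by exists `|k - lo|%N; rewrite ?mem_iota; lia.
Qed.

Lemma zrange_uniq lo hi : uniq (zrange lo hi).
Proof.
rewrite /zrange; case: ifP => // _.
by rewrite map_inj_uniq ?iota_uniq // => i i' /addrI [].
Qed.

Lemma zsum2B lo hi (lo' hi' : int -> int) (F G : int -> int -> int) :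
  zsum lo hi (fun t => zsum (lo' t) (hi' t) (fun s => F s t - G s t)) =
  zsum lo hi (fun t => zsum (lo' t) (hi' t) (fun s => F s t))
  - zsum lo hi (fun t => zsum (lo' t) (hi' t) (fun s => G s t)).
Proof.
rewrite !zsumE -sumrB; apply: eq_bigr => t _.
by rewrite !zsumE sumrB.
Qed.

Lemma zsum2_multinom (a b s0 t0 : int -> int -> int) M lo hi (lo' hi' : int -> int) :
  (forall s t, a s t + b s t = s + t) ->
  (forall s t u v, (u == a s t) && (v == b s t) = (s == s0 u v) && (t == t0 u v)) ->
  zsum lo hi (fun t => zsum (lo' t) (hi' t) (fun s =>
    multinom M (a s t) (b s t) (M%:Z - s - t))) =
  trinom_comb M (fun u v => let s := s0 u%:Z v%:Z in let t := t0 u%:Z v%:Z in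
    iverson ((lo <= t <= hi) && (lo' t <= s <= hi' t))).
Proof.
move=> ab_st ab_inv; rewrite zsumE.
rewrite (eq_bigr (fun t => \sum_(s <- zrange (lo' t) (hi' t)) trinom_comb M
  (fun u v => iverson (s == s0 u v) * iverson (t == t0 u v)))); last first.
  move=> t _; rewrite zsumE; apply: eq_bigr => s _.
  rewrite (_ : M%:Z - s - t = M%:Z - a s t - b s t) ?multinomE; last first.
    by have := ab_st s t; lia.
  by apply: eq_trinom_comb => u v _; rewrite ab_inv iversonM.
under eq_bigr => t _ do rewrite trinom_comb_sum.
rewrite trinom_comb_sum; apply: eq_trinom_comb => u v _ /=.
under eq_bigr => t _ do rewrite sum_iverson_eq ?zrange_uniq // mulrC.
by rewrite sum_iverson_eq ?zrange_uniq // iversonM !mem_zrange.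
Qed.

Lemma zsum2_multinomC (a b s0 t0 : int -> int -> int) M lo hi (lo' hi' : int -> int) :
  (forall s t, a s t + b s t = s + t) ->
  (forall s t u v, (u == a s t) && (v == b s t) = (s == s0 u v) && (t == t0 u v)) ->
  zsum lo hi (fun t => zsum (lo' t) (hi' t) (fun s =>
    multinom M (a s t) (b s t) (M%:Z - s - t))) =
  trinom_comb M (fun u v => let s := s0 v%:Z u%:Z in let t := t0 v%:Z u%:Z in
    iverson ((lo <= t <= hi) && (lo' t <= s <= hi' t))).
Proof. by move=> ab_st ab_inv; rewrite (@zsum2_multinom a b s0 t0) // trinom_combC. Qed.

Section MirrorSum.
Variable n : nat.

Definition mirror_sign (k : int) : int :=
  iverson ((0 <= k) && (k < n%:Z)) - iverson (k <= -2) - iverson (n%:Z + 1 <= k).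

Definition mirror_sum M (x : int) : int :=
  trinom_comb M (fun u v => mirror_sign (x + u%:Z - v%:Z)).

Lemma mirror_sumS M x :
  mirror_sum M.+1 x = mirror_sum M (x - 1) + mirror_sum M x + mirror_sum M (x + 1).
Proof.
rewrite /mirror_sum trinom_combS -addrA addrC.
by congr (_ + _ + _); apply: eq_trinom_comb => u v _; congr mirror_sign; lia.
Qed.

(* On the window |u - v| <= M <= n the weights are antisymmetric about either
   wall, and trinom is symmetric. *)
Lemma mirror_sum_boundary M x : (M <= n)%N -> x = -1 \/ x = n%:Z -> mirror_sum M x = 0.
Proof.
move=> leMn x_bd; suff: mirror_sum M x + mirror_sum M x = 0 by lia.
rewrite {2}/mirror_sum trinom_combC /mirror_sum trinom_combD.
rewrite (@eq_trinom_comb M _ (fun _ _ => 0)) => [|u v le_uvM]; last first.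
  by rewrite /mirror_sign /iverson; lia.
by rewrite /trinom_comb big1 // => u _; rewrite big1 // => v _; rewrite mul0r.
Qed.

End MirrorSum.

Lemma sum_ord_near n j (F : int -> int) : (j < n)%N -> F (-1) = 0 -> F n%:Z = 0 ->
  \sum_(k < n | (j <= k.+1)%N && (k <= j.+1)%N) F k%:Z
  = F (j%:Z - 1) + F j%:Z + F (j%:Z + 1).
Proof.
move=> ltjn F_1 F_n.
have F_ord x : -1 <= x <= n%:Z -> iverson ((0 <= x) && (x < n%:Z)) * F `|x|%N = F x.
  move=> x_bd; have [x_in|x_out] := boolP ((0 <= x) && (x < n%:Z)).
    by rewrite iverson1 // mul1r gez0_abs //; lia.
  by rewrite iverson0 // mul0r; have [->|->] : x = -1 \/ x = n%:Z by lia.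
rewrite big_mkcond (eq_bigr (fun k : 'I_n => iverson (k%:Z == j%:Z - 1) * F k
  + iverson (k%:Z == j%:Z) * F k + iverson (k%:Z == j%:Z + 1) * F k)); last first.
  move=> k _; rewrite -!mulrDl /=; case: ifP => near.
    by rewrite (_ : _ + _ = 1) ?mul1r //; rewrite /iverson; lia.
  by rewrite (_ : _ + _ = 0) ?mul0r //; rewrite /iverson; lia.
rewrite !big_split /= !(sum_ord_iverson_eq _ _ (fun k => F k%:Z)).
by rewrite (F_ord (j%:Z - 1)) ?(F_ord j%:Z) ?(F_ord (j%:Z + 1)) //; lia.
Qed.

Lemma card_WHom_mirror_sum n j M : (M <= n)%N -> (j < n)%N ->
  #|WHom j M.+1 n|%:Z = mirror_sum n M j%:Z.
Proof.
elim: M j => [|M IH] j leMn ltjn.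
  rewrite (_ : WHom j 1 n = [set [ffun=> Ordinal ltjn]]); last first.
    apply/setP => f; rewrite WHomE !inE.
    have -> : weak_hom f by apply/forallP => x; apply/forallP => y; rewrite !ord1.
    apply/eqP/eqP => [f0|-> //]; last by rewrite ffunE.
    by apply/ffunP => x; rewrite ffunE ord1; apply: val_inj.
  rewrite cards1 /mirror_sum /trinom_comb !big_ord1 mulr1 /mirror_sign /iverson.
  lia.
rewrite card_WHomS // -natz natr_sum.
under eq_bigr => k _ do rewrite natz (IH k (ltnW leMn) (ltn_ord k)).
rewrite sum_ord_near -?mirror_sumS //.
all: apply: mirror_sum_boundary (ltnW leMn) _; by [left | right].
Qed.

Theorem theorem2 (m n j : nat) (hm : (0 < m)%N) (hn : (0 < n)%N)
  (hmn : (m <= n)%N) (hj : (j < n)%N) :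
  (#|WHom j m n|%:Z =
     zsum (j%:Z + 1) (j%:Z + ((m%:Z - j%:Z - 1) %/ 2)%Z) (fun t =>
       zsum (t - j%:Z) (m%:Z - 1 - t) (fun s =>
         multinom m.-1 s t (m%:Z - 1 - s - t)
         - multinom m.-1 (t - j%:Z - 1) (s + j%:Z + 1) (m%:Z - 1 - s - t)))
   + zsum (Num.max (j%:Z - n%:Z + m%:Z + 1) 0) j%:Z (fun t =>
       zsum 0 (m%:Z - 1 - t) (fun s => multinom m.-1 s t (m%:Z - 1 - s - t)))
   + zsum 0 (j%:Z - n%:Z + m%:Z) (fun t =>
       zsum 0 (n%:Z - j%:Z - 1) (fun s => multinom m.-1 s t (m%:Z - 1 - s - t)))
   + zsum (n%:Z - j%:Z) (n%:Z - j%:Z - 1 + ((j%:Z - n%:Z + m%:Z) %/ 2)%Z) (fun t =>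
       zsum (t - (n%:Z - j%:Z - 1)) (m%:Z - 1 - t) (fun s =>
         multinom m.-1 s t (m%:Z - 1 - s - t)
         - multinom m.-1 (t - n%:Z + j%:Z) (s + n%:Z - j%:Z) (m%:Z - 1 - s - t))))%R.
Proof.
case: m hm hmn => // M _ leMn; rewrite succnK (_ : M.+1%:Z - 1 = M%:Z); last lia.
rewrite (card_WHom_mirror_sum (ltnW leMn) hj) !zsum2B.
rewrite (@zsum2_multinom (fun s t => s) (fun s t => t) (fun u v => u) (fun u v => v));
  [| by move=> *; lia ..].
rewrite (@zsum2_multinom (fun s t => t - j%:Z - 1) (fun s t => s + j%:Z + 1)
                         (fun u v => v - j%:Z - 1) (fun u v => u + j%:Z + 1));
  [| by move=> *; lia ..].
do 2 (rewrite (@zsum2_multinom (fun s t => s) (fun s t => t) (fun u v => u) (fun u v => v));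
  [| by move=> *; lia ..]).
(* Reflection in the upper wall exchanges the roles of up- and down-steps. *)
rewrite (@zsum2_multinomC (fun s t => s) (fun s t => t) (fun u v => u) (fun u v => v));
  [| by move=> *; lia ..].
rewrite (@zsum2_multinomC (fun s t => t - n%:Z + j%:Z) (fun s t => s + n%:Z - j%:Z)
                          (fun u v => v - n%:Z + j%:Z) (fun u v => u + n%:Z - j%:Z));
  [| by move=> *; lia ..].
rewrite !trinom_combB !trinom_combD /mirror_sum.
apply: eq_trinom_comb => u v le_uvM /=.
(* A single lia call on all the indicators at once produces a certificate too
   large for the kernel checker. *)
by case_iverson; rewrite /mirror_sign /iverson; lia.
Qed.
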